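(* Let $\mathfrak{R}$ be either $\mathbb{F}_q$ ($q$ a prime power) or $\mathbb{Z}_k$ ($k\ge2$), with elements listed as $0=\omega_0,\omega_1,\dots,\omega_{|\mathfrak{R}|-1}$. Let $C$ and $D$ be $\mathfrak{R}$-linear codes of length $n$ and $\bm{w}\in\mathfrak{R}^n$. Then \[ \mathfrak{Jac}^{av}(C,D,\bm{w};x_c:c\in\mathfrak{R}^3) =\sum_{L,R,H}A_L^C\,B_R^{D,\bm{w}}\, \frac{\prod_{a=(a_1,a_2)\in\mathfrak{R}^2}\binom{R_a}{H_{(\omega_0,a_1,a_2)},\ldots,H_{(\omega_{|\mathfrak{R}|-1},a_1,a_2)}}}{\binom{n}{L_{\omega_0},\ldots,L_{\omega_{|\mathfrak{R}|-1}}}} \prod_{c\in\mathfrak{R}^3}x_c^{H_c}, \] where the sum runs over compositions $L$ of $n$, Jacobi compositions $R$ of $n$ and joint Jacobi compositions $H$ of $n$ such that $L_b=\sum_{(a_1,a_2)\in\mathfrak{R}^2}H_{(b,a_1,a_2)}$ for all $b\in\mathfrak{R}$ and $R_{(a_1,a_2)}=\sum_{b\in\mathfrak{R}}H_{(b,a_1,a_2)}$ for all $(a_1,a_2)\in\mathfrak{R}^2$.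
   Context: An $\mathbb{F}_q$-linear code of length $n$ is a subspace of $\mathbb{F}_q^n$; a $\mathbb{Z}_k$-linear code is an additive subgroup of $\mathbb{Z}_k^n$. For $\bm{u}\in\mathfrak{R}^n$, $\ell_a(\bm{u})=\#\{i:u_i=a\}$ ($a\in\mathfrak{R}$); for $\bm{u},\bm{w}$, $r_a(\bm{u};\bm{w})=\#\{i:(u_i,w_i)=a\}$ ($a\in\mathfrak{R}^2$); for $\bm{u},\bm{v},\bm{w}$, $h_a(\bm{u},\bm{v};\bm{w})=\#\{i:(u_i,v_i,w_i)=a\}$ ($a\in\mathfrak{R}^3$). A composition (resp. Jacobi composition, joint Jacobi composition) of $n$ is a vector of non-negative integers indexed by $\mathfrak{R}$ (resp. $\mathfrak{R}^2$, $\mathfrak{R}^3$) with entries summing to $n$. $A_L^C=\#\{\bm{u}\in C:\ell_a(\bm{u})=L_a\ \forall a\in\mathfrak{R}\}$ and $B_R^{D,\bm{w}}=\#\{\bm{v}\in D: r_a(\bm{v};\bm{w})=R_a\ \forall a\in\mathfrak{R}^2\}$. The complete joint Jacobi polynomial is $\mathfrak{Jac}(C,D,\bm{w};x_c:c\in\mathfrak{R}^3)=\sum_{\bm{u}\in C,\bm{v}\in D}\prod_{c\in\mathfrak{R}^3}x_c^{h_c(\bm{u},\bm{v};\bm{w})}$. For $\sigma\in S_n$, $\bm{u}^\sigma=(u_{\sigma(1)},\dots,u_{\sigma(n)})$, $C^\sigma=\{\bm{u}^\sigma:\bm{u}\in C\}$, and $\mathfrak{Jac}^{av}(C,D,\bm{w};x_c:c\in\mathfrak{R}^3)=\frac{1}{n!}\sum_{\sigma\in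 S_n}\mathfrak{Jac}(C^\sigma,D,\bm{w};x_c:c\in\mathfrak{R}^3)$. Multinomial coefficients: $\binom{m}{m_1,\dots,m_k}=\frac{m!}{m_1!\cdots m_k!}$. *)

From HB Require Import structures.
From mathcomp Require Import all_boot all_order all_algebra all_fingroup.
From mathcomp Require Import mpoly.
Set Implicit Arguments.
Unset Strict Implicit.
Unset Printing Implicit Defensive.
Import GRing.Theory.
Local Open Scope ring_scope.

Definition Fq_or_Zk (R : finComUnitRingType) : Prop :=
  (forall x : R, x != 0 -> x \is a GRing.unit) \/
  (exists k : nat, (1 < k)%N /\ exists f : {rmorphism 'Z_k -> R}, bijective f).

Definition linear_code (R : finComUnitRingType) (n : nat) (C : {set 'rV[R]_n}) : Prop :=
  (0 \in C) /\ (forall (a : R) (u v : 'rV[R]_n), u \in C -> v \in C -> a *: u + v \in C).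

Section Defs.
Variable R : finComUnitRingType.
Variable n : nat.

(* l_a(u), r_a(u;w), h_c(u,v;w) ; triples are written (b, (a1, a2)) *)
Definition ell (a : R) (u : 'rV[R]_n) : nat := #|[set i : 'I_n | u 0 i == a]|.
Definition rcnt (a : R * R) (u w : 'rV[R]_n) : nat :=
  #|[set i : 'I_n | (u 0 i, w 0 i) == a]|.
Definition hcnt (c : R * (R * R)) (u v w : 'rV[R]_n) : nat :=
  #|[set i : 'I_n | (u 0 i, (v 0 i, w 0 i)) == c]|.

Definition NV : nat := #|{: R * (R * R)}|.
Definition xvar (c : R * (R * R)) : {mpoly rat[NV]} := 'X_(enum_rank c).

Definition jac (C D : {set 'rV[R]_n}) (w : 'rV[R]_n) : {mpoly rat[NV]} :=
  \sum_(u in C) \sum_(v in D) \prod_(c : R * (R * R)) xvar c ^+ hcnt c u v w.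

Definition rvperm (s : 'S_n) (u : 'rV[R]_n) : 'rV[R]_n := \row_i u 0 (s i).
Definition code_perm (s : 'S_n) (C : {set 'rV[R]_n}) : {set 'rV[R]_n} :=
  [set rvperm s u | u in C].

Definition jac_av (C D : {set 'rV[R]_n}) (w : 'rV[R]_n) : {mpoly rat[NV]} :=
  ((n`!)%:R)^-1 *: \sum_(s : 'S_n) jac (code_perm s C) D w.

Definition A_coef (C : {set 'rV[R]_n}) (L : {ffun R -> 'I_n.+1}) : nat :=
  #|[set u in C | [forall a, ell a u == L a]]|.
Definition B_coef (D : {set 'rV[R]_n}) (w : 'rV[R]_n) (Rc : {ffun R * R -> 'I_n.+1}) : nat :=
  #|[set v in D | [forall a, rcnt a v w == Rc a]]|.
End Defs.

Definition is_comp (T : finType) (n : nat) (L : {ffun T -> 'I_n.+1}) : bool :=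
  (\sum_(t : T) (L t : nat))%N == n.

Definition mcoef (T : finType) (m : nat) (f : T -> nat) : rat :=
  (m`!)%:R / (\prod_(t : T) (f t)`!)%N%:R.

(* Averaging over S_n replaces u by a uniformly random word u' of its type
   class K, the S_n-orbit of u, which has multinomial(n; L) elements.  For
   fixed v and w, the words u' with joint type H with (v, w) are obtained by
   choosing independently, for each value a of (v_i, w_i), a word of length
   R_a with H(b, a) letters b; there are prod_a multinomial(R_a; H(., a)) of
   them, and they lie in K exactly when the b-marginal of H is L.  Grouping
   u in C by L and v in D by R then produces A_L^C and B_R^{D,w}. *)

From HB Require Import structures.
From mathcomp Require Import all_boot all_order all_algebra all_fingroup.
From mathcomp Require Import mpoly zify.

Set Implicit Arguments.
Unset Strict Implicit.
Unset Printing Implicit Defensive.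

Import GRing.Theory Num.Theory.
Local Open Scope ring_scope.

Section Multinomial.
Variable B : finType.
Implicit Types (r : nat) (h : B -> nat).

(* Set to 0 when the parts do not add up to r, so that it always counts the
   words of length r with h b letters b. *)
Definition multinomial r h : rat := if (\sum_b h b == r)%N then mcoef r h else 0.

Lemma multinomialE r h : (\sum_b h b)%N = r -> multinomial r h = mcoef r h.
Proof. by move=> e; rewrite /multinomial e eqxx. Qed.

Lemma eq_mcoef r h1 h2 : h1 =1 h2 -> mcoef r h1 = mcoef r h2.
Proof. by move=> eh; rewrite /mcoef (eq_bigr (fun b => (h2 b)`!)) // => b _; rewrite eh. Qed.

Lemma eq_multinomial r h1 h2 : h1 =1 h2 -> multinomial r h1 = multinomial r h2.
Proof. by move=> eh; rewrite /multinomial (eq_mcoef r eh) (eq_bigr _ (fun b _ => eh b)). Qed.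

Lemma sum_decr h b : (0 < h b)%N -> (\sum_b' h b' = (\sum_b' (h b' - (b' == b))).+1)%N.
Proof.
move=> hb; rewrite (bigD1 b) //= [X in _ = X.+1](bigD1 b) //= eqxx subn1.
have -> : (\sum_(b' | b' != b) (h b' - (b' == b)) = \sum_(b' | b' != b) h b')%N.
  by apply: eq_bigr => b' /negbTE->; rewrite subn0.
by rewrite -addSn prednK.
Qed.

Lemma prod_fact_decr h b : (0 < h b)%N ->
  ((\prod_b' (h b' - (b' == b))`!) * h b = \prod_b' (h b')`!)%N.
Proof.
move=> hb; rewrite (bigD1 b) //= [in RHS](bigD1 b) //= eqxx subn1.
have -> : (\prod_(b' | b' != b) (h b' - (b' == b))`! = \prod_(b' | b' != b) (h b')`!)%N.
  by apply: eq_bigr => b' /negbTE->; rewrite subn0.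
by case: (h b) hb => // k _; rewrite factS /=; lia.
Qed.

(* Classify words of length r.+1 by their first letter. *)
Lemma multinomialS r h : multinomial r.+1 h =
  \sum_b (if (0 < h b)%N then multinomial r (fun b' => h b' - (b' == b))%N else 0).
Proof.
rewrite /multinomial /mcoef; case: eqP => [sum_h | sum_h]; last first.
  apply/esym/big1 => b _; case: ifP => // hb.
  by case: eqP => // e; exfalso; apply: sum_h; rewrite (sum_decr hb) e.
have -> : (r.+1)`!%:R / (\prod_b (h b)`!)%N%:R =
          \sum_b (r`!%:R * (h b)%:R / (\prod_b (h b)`!)%N%:R : rat).
  by rewrite -mulr_suml -mulr_sumr -natr_sum sum_h factS natrM [_ * r`!%:R]mulrC.
apply: eq_bigr => b _; case: ifPn => [hb | ]; last first.
  by rewrite -leqNgt leqn0 => /eqP->; rewrite mulr0 mul0r.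
move: sum_h; rewrite (sum_decr hb) => -[->]; rewrite eqxx -(prod_fact_decr hb) natrM.
have hb0 : ((h b)%:R : rat) != 0 by rewrite pnatr_eq0 -lt0n.
by rewrite [X in _ / X]mulrC invfM mulrA mulfK.
Qed.

End Multinomial.

Lemma count_enum (T : finType) (P : pred T) : count P (enum T) = #|[set x | P x]|.
Proof.
rewrite cardsE cardE /enum_mem size_filter count_filter.
by apply: eq_count => x; rewrite /= !inE andbT.
Qed.

Section JointType.
Variables A B : finType.

Lemma big_tupleS (M : nmodType) m (F : m.+1.-tuple B -> M) :
  \sum_(t : m.+1.-tuple B) F t = \sum_(b : B) \sum_(t : m.-tuple B) F [tuple of b :: t].
Proof.
rewrite pair_big /=; apply: (reindex (fun p : B * m.-tuple B => [tuple of p.1 :: p.2])).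
exists (fun t => (thead t, [tuple of behead t])) => [[b t] _|t _] /=.
  by congr pair; apply: val_inj.
by case: t / tupleP => b t; apply: val_inj.
Qed.

Lemma joint_type_cons (H c : A -> B -> nat) a0 b0 :
  [forall a, forall b, (((b0, a0) == (b, a)) + c a b)%N == H a b] =
  (0 < H a0 b0)%N && [forall a, forall b, c a b == (H a b - ((a == a0) && (b == b0)))%N].
Proof.
case: (posnP (H a0 b0)) => [H0 | Hpos] /=.
  apply/negbTE/forallPn; exists a0; apply/forallPn; exists b0.
  by rewrite eqxx H0.
apply/forallP/forallP => cH a; apply/forallP => b; have /forallP/(_ b) := cH a;
  rewrite xpair_eqE; case: (eqVneq a a0) => [->|na]; case: (eqVneq b b0) => [->|nb];
  rewrite ?eqxx ?andbF ?andbT ?(eq_sym b) ?(eq_sym a0) ?(negbTE na) ?(negbTE nb) /=;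
  move/eqP => e; apply/eqP; lia.
Qed.

Lemma count_tuples_joint_type m (s : m.-tuple A) (H : A -> B -> nat) :
  \sum_(t : m.-tuple B | [forall a, forall b, count_mem (b, a) (zip t s) == H a b]) (1 : rat)
  = \prod_a multinomial (count_mem a s) (H a).
Proof.
elim: m s H => [|m IH] s H.
  rewrite big_mkcond (big_pred1 [tuple]) => [|t]; last by apply/esym/eqP; exact: tuple0.
  rewrite (tuple0 s) /=; case: (boolP [forall a, forall b, 0%N == H a b]) => [H0 | ].
    apply/esym/big1 => a _.
    rewrite (@eq_multinomial _ _ _ (fun=> 0%N)) => [|b]; last first.
      by apply/esym/eqP/(forallP (forallP H0 a)).
    by rewrite multinomialE /mcoef big1_eq ?divr1.
  move/forallPn => [a /forallPn [b Hab]]; rewrite (bigD1 a) //= /multinomial.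
  case: eqP => [/eqP|]; last by rewrite mul0r.
  by rewrite sum_nat_eq0 => /forallP /(_ b) /=; rewrite eq_sym (negbTE Hab).
case: s / tupleP => a0 s; rewrite big_mkcond big_tupleS /=.
rewrite (bigD1 a0) //= eqxx add1n multinomialS mulr_suml; apply: eq_bigr => b0 _.
under eq_bigr do rewrite joint_type_cons.
case: ifP => Hpos; last by rewrite mul0r; apply: big1.
rewrite -big_mkcond IH (bigD1 a0) //= (@eq_multinomial _ _ _ (fun b => H a0 b - (b == b0))%N);
  last by move=> b; rewrite eqxx.
congr (_ * _); apply: eq_bigr => a na; rewrite (negbTE na) eq_sym (negbTE na) add0n.
by apply: eq_multinomial => b; rewrite subn0.
Qed.

Lemma card_rows_joint_type n (lab : 'I_n -> A) (H : A -> B -> nat) :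
  #|[set u : 'rV[B]_n |
     [forall a, forall b, #|[set i | (u 0 i, lab i) == (b, a)]| == H a b]]|%:R
  = \prod_a multinomial #|[set i | lab i == a]| (H a).
Proof.
rewrite (eq_bigr (fun a => multinomial (count_mem a [tuple lab i | i < n]) (H a))) => [|a _];
  last by rewrite /= count_map count_enum.
rewrite -count_tuples_joint_type -sum1_card natr_sum.
rewrite (reindex (fun t : n.-tuple B => \row_i tnth t i)) /=; last first.
  exists (fun u : 'rV[B]_n => [tuple u 0 i | i < n]) => [t _|u _].
    by apply: eq_from_tnth => i; rewrite tnth_mktuple mxE.
  by apply/rowP => i; rewrite mxE tnth_mktuple.
apply: eq_bigl => t; rewrite inE; apply: eq_forallb => a; apply: eq_forallb => b.
rewrite -[in RHS](map_tnth_enum t) /= zip_map count_map count_enum.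
by congr (_ == _); apply: eq_card => i; rewrite !inE mxE.
Qed.

End JointType.

Lemma card_set_partition (T K : finType) (P : pred T) (g : T -> K) :
  #|[set x | P x]| = (\sum_k #|[set x | P x && (g x == k)]|)%N.
Proof.
rewrite -sum1_card (partition_big g predT) //=; apply: eq_bigr => k _.
by rewrite -sum1_card; apply: eq_bigl => x; rewrite !inE.
Qed.

Section TypeClass.
Variables (R : finComUnitRingType) (n : nat).
Implicit Types (u v w : 'rV[R]_n) (s t : 'S_n).

Lemma sum_ell u : (\sum_a ell a u)%N = n.
Proof.
rewrite -[n in RHS]card_ord -cardsT (card_set_partition _ (u 0)).
by apply: eq_bigr => a _; apply: eq_card => i; rewrite !inE.
Qed.

Lemma sum_rcnt v w : (\sum_a rcnt a v w)%N = n.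
Proof.
rewrite -[n in RHS]card_ord -cardsT (card_set_partition _ (fun i => (v 0 i, w 0 i))).
by apply: eq_bigr => a _; apply: eq_card => i; rewrite !inE.
Qed.

Lemma ell_hcnt u v w b : ell b u = (\sum_a hcnt (b, a) u v w)%N.
Proof.
rewrite /ell (card_set_partition _ (fun i => (v 0 i, w 0 i))); apply: eq_bigr => a _.
by apply: eq_card => i; rewrite !inE.
Qed.

Lemma rvpermM s t u : rvperm s (rvperm t u) = rvperm (s * t) u.
Proof. by apply/rowP => i; rewrite !mxE permM. Qed.

Lemma rvperm_inj s : injective (@rvperm R n s).
Proof.
move=> u u' /rowP E; apply/rowP => i.
by move: (E (s^-1 i)%g); rewrite !mxE permKV.
Qed.

Lemma ell_rvperm s a u : ell a (rvperm s u) = ell a u.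
Proof.
rewrite /ell -[RHS](card_preimset _ (@perm_inj _ s)); apply: eq_card => i.
by rewrite !inE mxE.
Qed.

Definition type_class u : {set 'rV[R]_n} := [set u' | [forall a, ell a u' == ell a u]].

Lemma type_class_refl u : u \in type_class u.
Proof. by rewrite inE; apply/forallP. Qed.

Lemma rvperm_type_class s u u' : (rvperm s u' \in type_class u) = (u' \in type_class u).
Proof. by rewrite !inE; apply: eq_forallb => a; rewrite ell_rvperm. Qed.

Lemma type_classP u u' : u' \in type_class u -> exists t, u' = rvperm t u.
Proof.
rewrite inE => /forallP ell_u'.
have /tuple_permP[t tE] : perm_eq [tuple u' 0 i | i < n] [tuple u 0 i | i < n].
  apply/allP => x _; apply/eqP; rewrite /= !count_map -!enumT !count_enum.
  by rewrite -[RHS]/(ell x u) -(eqP (ell_u' x)); apply: eq_card => i; rewrite !inE.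
exists t; apply/rowP => i; have := congr1 (fun tp => tnth tp i) (val_inj tE).
by rewrite !tnth_mktuple mxE.
Qed.

Lemma card_type_class u : #|type_class u|%:R = mcoef n (fun b => ell b u).
Proof.
(* With a constant labelling, the joint type is just the letter count. *)
have := card_rows_joint_type (fun _ : 'I_n => tt) (fun _ b => ell b u).
rewrite (bigD1 tt) //= big_pred0_eq mulr1.
have -> : #|[set i : 'I_n | tt == tt]| = n.
  by rewrite -[RHS]card_ord; apply: eq_card => i; rewrite inE.
rewrite multinomialE ?sum_ell // => <-; congr (_%:R); apply: eq_card => u'; rewrite !inE.
apply/forallP/forallP => [ell_u' [] | ell_u' b]; first apply/forallP => b;
  [move: (ell_u' b) | move: (forallP (ell_u' tt) b)];
  by congr (_ == _); apply: eq_card => i; rewrite !inE xpair_eqE eqxx andbT.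
Qed.

Lemma sum_perm_type_class (M : nmodType) (F : 'rV[R]_n -> M) u :
  (\sum_s F (rvperm s u)) *+ #|type_class u| = (\sum_(u' in type_class u) F u') *+ n`!.
Proof.
transitivity (\sum_(u' in type_class u) \sum_s F (rvperm s u')).
  rewrite -sumr_const; apply: eq_bigr => u' /type_classP[t ->].
  by under [RHS]eq_bigr do rewrite rvpermM; rewrite [LHS](reindex_inj (mulIg t)).
rewrite exchange_big /= -card_Sn -sumr_const; apply: eq_bigr => s _.
rewrite [RHS](reindex_inj (@rvperm_inj s)) /=.
by apply: eq_bigl => u'; rewrite rvperm_type_class.
Qed.

Lemma card_type_class_joint u v w (H : R * (R * R) -> nat) :
  #|[set u' in type_class u | [forall a, forall b, hcnt (b, a) u' v w == H (b, a)]]|%:R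
  = if [forall b, ell b u == \sum_a H (b, a)]%N
    then \prod_a multinomial (rcnt a v w) (fun b => H (b, a)) else 0.
Proof.
have ell_joint u' : [forall a, forall b, hcnt (b, a) u' v w == H (b, a)] ->
    forall b, ell b u' = (\sum_a H (b, a))%N.
  move=> /forallP joint_u' b; rewrite (ell_hcnt u' v w b); apply: eq_bigr => a _.
  exact/eqP/(forallP (joint_u' a) b).
case: ifPn => [/forallP ell_u | /forallPn[b ell_u]].
  rewrite -(card_rows_joint_type (fun i => (v 0 i, w 0 i)) (fun a b => H (b, a))).
  congr (_%:R); apply: eq_card => u'; rewrite !inE andb_idl // => /ell_joint ellE.
  by apply/forallP => b; rewrite ellE eq_sym.
rewrite (_ : [set _ in _ | _] = set0) ?cards0 //; apply/setP => u'; rewrite !inE.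
apply/negbTE/andP => -[/forallP ell_u' /ell_joint ellE].
by move: ell_u; rewrite -(eqP (ell_u' b)) ellE eqxx.
Qed.

End TypeClass.

Lemma sum_fibers (T K : finType) (S : pzRingType) (M : lmodType S)
    (X : {set T}) (f : T -> K) (P : pred K) (h : K -> M) :
  (forall x, P (f x)) ->
  \sum_(x in X) h (f x) = \sum_(k | P k) #|[set x in X | f x == k]|%:R *: h k.
Proof.
move=> Pf; rewrite (partition_big f P) //=; apply: eq_bigr => k _.
rewrite -sum1_card natr_sum scaler_suml.
by apply: eq_big => [x|x /andP[_ /eqP->]]; rewrite ?scale1r // !inE.
Qed.

Section JacobiPolynomial.
Variables (R : finComUnitRingType) (n : nat).
Implicit Types (u v w : 'rV[R]_n) (C D : {set 'rV[R]_n}).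

Definition composition u : {ffun R -> 'I_n.+1} := [ffun a => inord (ell a u)].
Definition jacobi_composition v w : {ffun R * R -> 'I_n.+1} := [ffun a => inord (rcnt a v w)].
Definition joint_composition u v w : {ffun R * (R * R) -> 'I_n.+1} :=
  [ffun c => inord (hcnt c u v w)].

Lemma card_set_ltn (P : pred 'I_n) : (#|[set i | P i]| < n.+1)%N.
Proof. by rewrite ltnS -[n in (_ <= n)%N]card_ord max_card. Qed.

Lemma compositionE u a : composition u a = ell a u :> nat.
Proof. by rewrite ffunE inordK // card_set_ltn. Qed.

Lemma jacobi_compositionE v w a : jacobi_composition v w a = rcnt a v w :> nat.
Proof. by rewrite ffunE inordK // card_set_ltn. Qed.

Lemma joint_compositionE u v w c : joint_composition u v w c = hcnt c u v w :> nat.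
Proof. by rewrite ffunE inordK // card_set_ltn. Qed.

Lemma composition_comp u : is_comp (composition u).
Proof. by rewrite /is_comp; under eq_bigr do rewrite compositionE; rewrite sum_ell. Qed.

Lemma jacobi_composition_comp v w : is_comp (jacobi_composition v w).
Proof. by rewrite /is_comp; under eq_bigr do rewrite jacobi_compositionE; rewrite sum_rcnt. Qed.

Lemma eq_composition u (L : {ffun R -> 'I_n.+1}) :
  (composition u == L) = [forall a, ell a u == L a].
Proof.
apply/eqP/forallP => [<- a | ellE]; first by rewrite compositionE.
by apply/ffunP => a; apply: ord_inj; rewrite compositionE (eqP (ellE a)).
Qed.

Lemma eq_jacobi_composition v w (Rc : {ffun R * R -> 'I_n.+1}) :
  (jacobi_composition v w == Rc) = [forall a, rcnt a v w == Rc a].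
Proof.
apply/eqP/forallP => [<- a | rcntE]; first by rewrite jacobi_compositionE.
by apply/ffunP => a; apply: ord_inj; rewrite jacobi_compositionE (eqP (rcntE a)).
Qed.

Lemma eq_joint_composition u v w (H : {ffun R * (R * R) -> 'I_n.+1}) :
  (joint_composition u v w == H) = [forall a, forall b, hcnt (b, a) u v w == H (b, a)].
Proof.
apply/eqP/forallP => [<- a | hcntE]; first by apply/forallP => b; rewrite joint_compositionE.
apply/ffunP => -[b a]; apply: ord_inj.
by rewrite joint_compositionE (eqP (forallP (hcntE a) b)).
Qed.

Lemma type_class_joint_fraction u v w (H : {ffun R * (R * R) -> 'I_n.+1}) :
  #|[set u' in type_class u | joint_composition u' v w == H]|%:R / #|type_class u|%:R =
  if [&& is_comp H,
         [forall b, (composition u b : nat) == \sum_a (H (b, a) : nat)]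
       & [forall a, (jacobi_composition v w a : nat) == \sum_b (H (b, a) : nat)]]%N
  then (\prod_a mcoef (jacobi_composition v w a) (fun b => H (b, a)))
       / mcoef n (fun b => composition u b)
  else 0.
Proof.
have -> : [set u' in type_class u | joint_composition u' v w == H] =
          [set u' in type_class u | [forall a, forall b, hcnt (b, a) u' v w == H (b, a)]].
  by apply/setP => u'; rewrite !inE eq_joint_composition.
rewrite (card_type_class_joint u v w (fun c => H c)) card_type_class (eq_mcoef n (compositionE u)).
have -> : [forall b, (composition u b : nat) == \sum_a (H (b, a) : nat)]%N =
          [forall b, ell b u == \sum_a (H (b, a) : nat)]%N.
  by apply: eq_forallb => b; rewrite compositionE.
case: ifPn => [/forallP ell_u | _]; last by rewrite mul0r andbF.
case: forallP => [rcnt_v | /forallP/forallPn[a rcnt_v]]; last first.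
  rewrite !andbF (bigD1 a) //= /multinomial -jacobi_compositionE.
  by rewrite eq_sym (negbTE rcnt_v) !mul0r.
have -> : is_comp H.
  rewrite /is_comp -[X in _ == X](sum_ell u).
  rewrite (eq_bigr (fun c => H (c.1, c.2) : nat)) => [|[] //].
  rewrite -(pair_bigA _ (fun b a => H (b, a) : nat)) /=.
  by apply/eqP/eq_bigr => b _; rewrite (eqP (ell_u b)).
congr (_ / _); apply: eq_bigr => a _.
by rewrite jacobi_compositionE multinomialE // -jacobi_compositionE (eqP (rcnt_v a)).
Qed.

Definition xmonomial (H : {ffun R * (R * R) -> 'I_n.+1}) : {mpoly rat[NV R]} :=
  \prod_c xvar c ^+ H c.

Definition jac_av_term (L : {ffun R -> 'I_n.+1}) (Rc : {ffun R * R -> 'I_n.+1}) :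
    {mpoly rat[NV R]} :=
  \sum_(H : {ffun R * (R * R) -> 'I_n.+1} |
          [&& is_comp H,
              [forall b, (L b : nat) == \sum_a (H (b, a) : nat)]
            & [forall a, (Rc a : nat) == \sum_b (H (b, a) : nat)]]%N)
    ((\prod_a mcoef (Rc a) (fun b => H (b, a))) / mcoef n (fun b => L b)) *: xmonomial H.

Lemma jac_av_termE u v w :
  (n`!%:R)^-1 *: \sum_s xmonomial (joint_composition (rvperm s u) v w) =
  jac_av_term (composition u) (jacobi_composition v w).
Proof.
set K := type_class u.
have K0 : (#|K|%:R : rat) != 0.
  by rewrite pnatr_eq0 -lt0n card_gt0; apply/set0Pn; exists u; apply: type_class_refl.
have nf0 : (n`!%:R : rat) != 0 by rewrite pnatr_eq0 -lt0n fact_gt0.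
have -> : (n`!%:R)^-1 *: \sum_s xmonomial (joint_composition (rvperm s u) v w) =
          (#|K|%:R)^-1 *: \sum_(u' in K) xmonomial (joint_composition u' v w).
  have := sum_perm_type_class (fun u' => xmonomial (joint_composition u' v w)) u.
  rewrite -!scaler_nat => /(congr1 (fun p => (#|K|%:R * n`!%:R)^-1 *: p)).
  by rewrite !scalerA invfM mulfVK // mulrAC mulVf // mul1r.
rewrite (@sum_fibers _ _ _ _ K (fun u' => joint_composition u' v w) predT xmonomial) // scaler_sumr.
rewrite /jac_av_term [RHS]big_mkcond; apply: eq_bigr => H _.
by rewrite scalerA mulrC type_class_joint_fraction; case: ifP; rewrite ?scale0r.
Qed.

Lemma jac_avE C D w :
  jac_av C D w = \sum_(u in C) \sum_(v in D) jac_av_term (composition u) (jacobi_composition v w).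
Proof.
rewrite /jac_av /jac.
have -> : \sum_s \sum_(u in code_perm s C) \sum_(v in D) \prod_c xvar c ^+ hcnt c u v w =
          \sum_s \sum_(u in C) \sum_(v in D) xmonomial (joint_composition (rvperm s u) v w).
  apply: eq_bigr => s _; rewrite big_imset => [|u u' _ _]; last exact: rvperm_inj.
  apply: eq_bigr => u _; apply: eq_bigr => v _.
  by apply: eq_bigr => c _; rewrite joint_compositionE.
rewrite exchange_big scaler_sumr; apply: eq_bigr => u _.
by rewrite exchange_big scaler_sumr; apply: eq_bigr => v _; apply: jac_av_termE.
Qed.

Lemma A_coefE C L : A_coef C L = #|[set u in C | composition u == L]|.
Proof. by apply: eq_card => u; rewrite !inE eq_composition. Qed.

Lemma B_coefE D w Rc : B_coef D w Rc = #|[set v in D | jacobi_composition v w == Rc]|.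
Proof. by apply: eq_card => v; rewrite !inE eq_jacobi_composition. Qed.

End JacobiPolynomial.

Theorem theorem4p5 (R : finComUnitRingType) (hR : Fq_or_Zk R) (n : nat)
  (C D : {set 'rV[R]_n}) (hC : linear_code C) (hD : linear_code D)
  (w : 'rV[R]_n) :
  jac_av C D w =
  \sum_(L : {ffun R -> 'I_n.+1} | is_comp L)
   \sum_(Rc : {ffun R * R -> 'I_n.+1} | is_comp Rc)
    \sum_(H : {ffun R * (R * R) -> 'I_n.+1} |
          [&& is_comp H,
              [forall b : R, (L b : nat) == (\sum_(a : R * R) (H (b, a) : nat))%N]
            & [forall a : R * R, (Rc a : nat) == (\sum_(b : R) (H (b, a) : nat))%N]])
      (((A_coef C L * B_coef D w Rc)%N%:R
         * (\prod_(a : R * R) mcoef (Rc a) (fun b : R => (H (b, a) : nat)))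
         / mcoef n (fun b : R => (L b : nat)))
       *: \prod_(c : R * (R * R)) xvar c ^+ H c).
Proof.
rewrite jac_avE (@sum_fibers _ _ _ _ C _ _
  (fun L => \sum_(v in D) jac_av_term L (jacobi_composition v w)) (@composition_comp _ n)).
apply: eq_bigr => L _.
rewrite (@sum_fibers _ _ _ _ D _ _ (jac_av_term L) (fun v => jacobi_composition_comp v w)).
rewrite scaler_sumr; apply: eq_bigr => Rc _.
rewrite -A_coefE -B_coefE scalerA scaler_sumr; apply: eq_bigr => H _.
by rewrite scalerA mulrA -natrM.
Qed.
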